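(* Let $R$ be a unital ring and $E$ a finite directed graph satisfying Condition (NE). Then there exists a non-negative integer $k$ such that $(L_R(E))_0=\bigcup_{m=0}^{k}C_m$. In particular, $(L_R(E))_0$ is a finitely generated $R$-module.
   Context: A directed graph $E=(E^0,E^1,s,r)$ has vertex set $E^0$, edge set $E^1$, source and range maps $s,r\colon E^1\to E^0$; it is finite if $E^0,E^1$ are finite. A path is a sequence of edges $f_1\cdots f_n$ with $s(f_{i+1})=r(f_i)$, of length $\mathrm{len}=n$; a cycle is a path with $s(f_1)=r(f_n)$ and $s(f_i)\neq s(f_1)$ for $2\le i\le n$; it has an exit if some edge $f$ satisfies $s(f)=s(f_i)$ for some $i$ with $f\neq f_i$. Condition (NE): no cycle has an exit. The Leavitt path algebra $L_R(E)$ is the $R$-algebra generated by $v\in E^0$, $f,f^*$ ($f\in E^1$), with $R$ commuting with generators, subject to $v_iv_j=\delta_{i,j}v_i$; $s(f)f=fr(f)=f$, $r(f)f^*=f^*s(f)=f^*$; $f^*f'=\delta_{f,f'}r(f)$; and $\sum_{s(f)=v}ff^*=v$ whenever $s^{-1}(v)$ is nonempty and finite. For a path $\alpha=f_1\cdots f_n$, $\alpha^*=f_n^*\cdots f_1^*$ (vertices are paths of length 0 with $v^*=v$). Every element of $L_R(E)$ is a finite sum $\sum r_i\alpha_i\beta_i^*$ with $r_i\in R$ and $\alpha_i,\beta_i$ paths. The canonical $\mathbb{Z}$-grading has $(L_R(E))_n$ equal to the set of such sums with $\mathrm{len}(\alpha_i)-\mathrm{len}(\beta_i)=n$ for all $i$.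 For $m\ge 0$, $C_m=\mathrm{Span}_R\{\alpha\beta^*:\mathrm{len}(\alpha)=\mathrm{len}(\beta)=m\}$. *)

From HB Require Import structures.
From mathcomp Require Import all_boot all_order all_algebra.
Set Implicit Arguments. Unset Strict Implicit. Unset Printing Implicit Defensive.
Import GRing.Theory.
Local Open Scope ring_scope.

(* A path is represented by its source vertex
   together with its list of edges (so that length-0 paths are vertices). *)

Section Graph.
Variables (V Ed : finType) (s r : Ed -> V).

Fixpoint path_ok (v : V) (p : seq Ed) : bool :=
  match p with
  | [::] => true
  | f :: p' => (s f == v) && path_ok (r f) p'
  end.

Fixpoint path_end (v : V) (p : seq Ed) : V :=
  match p with
  | [::] => v
  | f :: p' => path_end (r f) p'
  end.

Definition is_cycle (c : seq Ed) : Prop :=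
  exists (f1 : Ed) (c' : seq Ed),
    c = f1 :: c' /\ path_ok (s f1) c /\ path_end (s f1) c = s f1 /\
    (forall f, f \in c' -> s f != s f1).

Definition has_exit (c : seq Ed) : Prop :=
  exists f g : Ed, g \in c /\ s f = s g /\ f != g.

Definition cond_NE : Prop := forall c, is_cycle c -> ~ has_exit c.

End Graph.

Section Leavitt.
Variables (V Ed : finType) (s r : Ed -> V) (R : pzRingType).

(* An algebra over R in which R "commutes with the generators" is modelled as
   a ring A together with a unital ring morphism iota : R -> A; scalars act by
   left multiplication with iota.  A Leavitt E-family in A consists of
   elements vtx v, edg f (= f), gst f (= f^* ) satisfying the relations. *)
Definition leavitt_family (A : pzRingType) (iota : R -> A)
    (vtx : V -> A) (edg gst : Ed -> A) : Prop :=
  [/\ (forall (a : R) v, iota a * vtx v = vtx v * iota a),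
      (forall (a : R) f, iota a * edg f = edg f * iota a) &
      (forall (a : R) f, iota a * gst f = gst f * iota a)] /\
  [/\
      (forall v w, vtx v * vtx w = if v == w then vtx v else 0),
      (forall f, vtx (s f) * edg f = edg f /\ edg f * vtx (r f) = edg f /\
                 vtx (r f) * gst f = gst f /\ gst f * vtx (s f) = gst f),
      (forall f f', gst f * edg f' = if f == f' then vtx (r f) else 0) &
      (* CK2 at every non-sink (s^{-1}(v) is automatically finite) *)
      (forall v, (exists f, s f = v) ->
         \sum_(f | s f == v) edg f * gst f = vtx v)].

(* (A, iota, vtx, edg, gst) is the Leavitt path algebra L_R(E): it carries a
   Leavitt E-family and is universal (the algebra presented by these
   generators and relations): for every other such (B, iotaB, family) there is
   a unique (not necessarily unital) R-algebra morphism A -> B sending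
   generators to generators. *)
Definition is_leavitt_path_algebra (A : pzRingType) (iota : {rmorphism R -> A})
    (vtx : V -> A) (edg gst : Ed -> A) : Prop :=
  leavitt_family iota vtx edg gst /\
  forall (B : pzRingType) (iotaB : {rmorphism R -> B})
         (vB : V -> B) (eB gB : Ed -> B),
    leavitt_family iotaB vB eB gB ->
    let is_hom (phi : A -> B) :=
      [/\ forall x y, phi (x + y) = phi x + phi y,
          forall x y, phi (x * y) = phi x * phi y,
          forall (a : R) x, phi (iota a * x) = iotaB a * phi x,
          forall v, phi (vtx v) = vB v &
          forall f, phi (edg f) = eB f /\ phi (gst f) = gB f] in
    exists phi : A -> B, is_hom phi /\
      forall psi : A -> B, is_hom psi -> forall x, psi x = phi x.

Variables (A : pzRingType) (iota : {rmorphism R -> A})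
          (vtx : V -> A) (edg gst : Ed -> A).

Definition path_elt (v : V) (p : seq Ed) : A :=
  if p is [::] then vtx v else \prod_(f <- p) edg f.

Definition ghost_elt (v : V) (p : seq Ed) : A :=
  if p is [::] then vtx v else \prod_(f <- rev p) gst f.

Definition pair_paths := ((V * seq Ed) * (V * seq Ed))%type.

Definition in_span (P : pred pair_paths) (x : A) : Prop :=
  exists l : seq (R * pair_paths),
    all (fun t : R * pair_paths =>
           [&& path_ok s r t.2.1.1 t.2.1.2, path_ok s r t.2.2.1 t.2.2.2 & P t.2]) l
    /\ x = \sum_(t <- l) iota t.1 * path_elt t.2.1.1 t.2.1.2
                                   * ghost_elt t.2.2.1 t.2.2.2.

Definition degree0 (x : A) : Prop :=
  in_span (fun t : pair_paths => size t.1.2 == size t.2.2) x.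

Definition C_m (m : nat) (x : A) : Prop :=
  in_span (fun t : pair_paths => (size t.1.2 == m) && (size t.2.2 == m)) x.

Definition in_sum_C (k : nat) (x : A) : Prop :=
  exists xs : 'I_k.+1 -> A, (forall m : 'I_k.+1, C_m m (xs m)) /\
                            x = \sum_(m < k.+1) xs m.

Definition degree0_fin_gen : Prop :=
  exists g : seq A, forall x, degree0 x <->
    exists c : 'I_(size g) -> R, x = \sum_(i < size g) iota (c i) * g`_i.

End Leavitt.

From HB Require Import structures.
From mathcomp Require Import all_boot all_order all_algebra.
Set Implicit Arguments. Unset Strict Implicit. Unset Printing Implicit Defensive.

(* Under (NE), if s(f) lies on a closed path then f is the only edge out of
   s(f), and the successor map is injective on such vertices since each of
   them is periodic.  A path of length at least |V| revisits a vertex, so its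
   last edge starts on a closed path.  Hence for paths af and bg of equal
   length > |V|, (af)(bg)^* = a (f g^* ) b^* vanishes if f <> g (then
   r(f) <> r(g)), and equals a s(f) b^* = a b^* if f = g, by (CK2).  So every
   degree-0 monomial is 0 or a monomial of length at most |V|: k = |V| works,
   and the finitely many such monomials generate (L_R(E))_0. *)

Section ClosedPaths.
Variables (V Ed : finType) (s r : Ed -> V).

Lemma path_ok_cat v a b :
  path_ok s r v (a ++ b) = path_ok s r v a && path_ok s r (path_end r v a) b.
Proof. by elim: a v => [|f a IHa] v //=; rewrite IHa andbA. Qed.

Lemma path_end_cat v a b : path_end r v (a ++ b) = path_end r (path_end r v a) b.
Proof. by elim: a v => [|f a IHa] v //=. Qed.

Lemma path_ok_rcons v a f :
  path_ok s r v (rcons a f) = path_ok s r v a && (s f == path_end r v a).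
Proof. by rewrite -cats1 path_ok_cat /= andbT. Qed.

Lemma path_end_rcons v a f : path_end r v (rcons a f) = r f.
Proof. by rewrite -cats1 path_end_cat. Qed.

Definition on_closed_path (u : V) : Prop :=
  exists p, [/\ path_ok s r u p, p != [::] & path_end r u p = u].

Hypothesis NE : cond_NE s r.

(* Cut the closed path at its first return to u: the first piece is a cycle,
   to which (NE) applies, and the rest is a shorter closed path at u. *)
Lemma closed_path_out_unique u p g f :
  path_ok s r u p -> path_end r u p = u -> g \in p -> s f = s g -> f = g.
Proof.
have [n] := ubnP (size p); elim: n => // n IHn in u p g *.
case: p => [//|f1 p] /= /ltnSE size_p /andP[/eqP src_f1 ok_p] end_p.
have cycle_out q : path_ok s r (r f1) q -> path_end r (r f1) q = u ->
    ~~ has (fun h => s h == u) q -> g \in f1 :: q -> s f = s g -> f = g.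
  move=> ok_q end_q /hasPn q_avoids_u g_q fg_src.
  have cyc : is_cycle s r (f1 :: q).
    exists f1, q; rewrite /= src_f1 eqxx ok_q end_q.
    by do 3!split=> //; apply: q_avoids_u.
  have [//|neq_fg] := eqVneq f g.
  by case: (NE cyc); exists f, g.
have [has_u|no_u] := boolP (has (fun h => s h == u) p); last exact: cycle_out.
move: size_p ok_p end_p; case/split_find: has_u => h q t /eqP src_h q_avoids_u.
rewrite cat_rcons path_ok_cat path_end_cat /= src_h.
move=> size_p /and3P[ok_q /eqP end_q ok_t] end_p.
rewrite -cat_cons mem_cat => /orP[g_q | g_ht].
  exact: (cycle_out q ok_q (esym end_q)).
apply: (IHn u (h :: t)) => //=; last by rewrite src_h eqxx.
by apply: leq_ltn_trans size_p; rewrite size_cat leq_addl.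
Qed.

Lemma on_closed_path_out_unique u f g :
  on_closed_path u -> s f = u -> s g = u -> f = g.
Proof.
case=> -[|f1 p] [ok_p // _ end_p] src_f src_g.
have src_f1 : s f1 = u by case/andP: ok_p => /eqP.
have f1_p : f1 \in f1 :: p := mem_head f1 p.
rewrite (closed_path_out_unique ok_p end_p f1_p (f := f)) ?src_f //.
by rewrite (closed_path_out_unique ok_p end_p f1_p (f := g)) ?src_g.
Qed.

Lemma on_closed_path_rng u f : on_closed_path u -> s f = u -> on_closed_path (r f).
Proof.
move=> closed_u src_f; case: (closed_u) => -[|f1 p] [ok_p // _ end_p].
move: ok_p end_p => /= /andP[/eqP src_f1 ok_p] end_p.
have <- : f1 = f by apply: (on_closed_path_out_unique closed_u).
exists (rcons p f1); split; last by rewrite path_end_rcons.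
- by rewrite path_ok_rcons ok_p end_p src_f1 eqxx.
- by rewrite -size_eq0 size_rcons.
Qed.

Lemma on_closed_path_src u p g :
  on_closed_path u -> path_ok s r u p -> g \in p -> on_closed_path (s g).
Proof.
elim: p u => [//|f p IHp] u closed_u /= /andP[/eqP src_f ok_p].
rewrite inE => /orP[/eqP-> | g_p]; first by rewrite src_f.
exact: IHp (on_closed_path_rng closed_u src_f) ok_p g_p.
Qed.

Definition next_vertex (u : V) : V :=
  if [pick f | s f == u] is Some f then r f else u.

Lemma next_vertexE u f : on_closed_path u -> s f = u -> next_vertex u = r f.
Proof.
move=> closed_u src_f; rewrite /next_vertex; case: pickP => [e /eqP src_e|].
  by rewrite (on_closed_path_out_unique closed_u src_e src_f).
by move/(_ f); rewrite src_f eqxx.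
Qed.

Lemma on_closed_path_end u p :
  on_closed_path u -> path_ok s r u p -> path_end r u p = iter (size p) next_vertex u.
Proof.
elim: p u => [//|f p IHp] u closed_u /= /andP[/eqP src_f ok_p].
rewrite (IHp _ (on_closed_path_rng closed_u src_f) ok_p).
by rewrite -iterS iterSr (next_vertexE closed_u src_f).
Qed.

Lemma on_closed_path_periodic u :
  on_closed_path u -> exists2 m, 0 < m & iter m next_vertex u = u.
Proof.
move=> closed_u; case: (closed_u) => p [ok_p p_nil end_p].
by exists (size p); [rewrite lt0n size_eq0 | rewrite -on_closed_path_end].
Qed.

(* u and u' are both fixed by the (m * m')-th iterate of next_vertex, which
   starts with next_vertex. *)
Lemma next_vertex_inj u u' : on_closed_path u -> on_closed_path u' ->
  next_vertex u = next_vertex u' -> u = u'.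
Proof.
move=> /on_closed_path_periodic[m m_gt0 per_u].
move=> /on_closed_path_periodic[m' m'_gt0 per_u'] next_uu'.
have mm'_gt0 : 0 < m * m' by rewrite muln_gt0 m_gt0.
have : iter (m * m') next_vertex u' = u' by rewrite iterM iter_fix.
have : iter (m * m') next_vertex u = u by rewrite mulnC iterM iter_fix.
by rewrite -(prednK mm'_gt0) !iterSr next_uu' => -> ->.
Qed.

Lemma on_closed_path_in_unique f g : on_closed_path (s f) -> on_closed_path (s g) ->
  r f = r g -> f = g.
Proof.
move=> closed_f closed_g rng_fg.
have src_fg : s f = s g.
  apply: next_vertex_inj => //.
  by rewrite (next_vertexE closed_f erefl) (next_vertexE closed_g erefl).
exact: on_closed_path_out_unique closed_f erefl (esym src_fg).
Qed.

Lemma path_vertex_repeat v p : path_ok s r v p -> ~~ uniq (v :: map r p) ->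
  exists p1 p2, [/\ p = p1 ++ p2, p2 != [::] & on_closed_path (path_end r v p1)].
Proof.
elim: p v => [//|f p IHp] v /= /andP[/eqP src_f ok_p].
rewrite negb_and negbK inE => /orP[/orP[/eqP v_rf | /mapP[g g_p v_rg]] | dup_p].
- exists [::], (f :: p); split=> //.
  by exists [:: f]; rewrite /= src_f eqxx v_rf.
- case/splitPr: g_p ok_p => q1 q2 ok_q.
  exists [::], (f :: q1 ++ g :: q2); split=> //.
  exists (f :: rcons q1 g); split=> //=; last by rewrite path_end_rcons v_rg.
  by move: ok_q; rewrite -cat_rcons path_ok_cat src_f eqxx => /andP[].
- have [p1 [p2 [-> p2_nil closed_p1]]] := IHp _ ok_p dup_p.
  by exists (f :: p1), p2.
Qed.

(* By pigeonhole the path revisits a vertex, and it cannot leave the closed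
   path formed in between. *)
Lemma long_path_last_src v a f :
  path_ok s r v (rcons a f) -> #|V| <= size (rcons a f) -> on_closed_path (s f).
Proof.
move=> ok_af long_af.
have dup : ~~ uniq (v :: map r (rcons a f)).
  apply: contraL long_af => /card_uniqP card_eq; rewrite -ltnNge.
  by have := max_card (mem (v :: map r (rcons a f))); rewrite card_eq /= size_map.
have [p1 [p2 [split_af p2_nil closed_p1]]] := path_vertex_repeat ok_af dup.
case/lastP: p2 split_af p2_nil => [//|b g] split_af _.
have -> : f = g by move: (congr1 (last f) split_af); rewrite last_cat !last_rcons.
apply: (on_closed_path_src closed_p1 (p := rcons b g)).
  by move: ok_af; rewrite split_af path_ok_cat => /andP[].
by rewrite mem_rcons mem_head.
Qed.

End ClosedPaths.

Definition short_seqs (T : finType) (n : nat) : seq (seq T) :=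
  flatten [seq [seq val t | t : m.-tuple T] | m <- iota 0 n.+1].

Lemma mem_short_seqs (T : finType) n (t : seq T) : size t <= n -> t \in short_seqs T n.
Proof.
move=> size_t; apply/flatten_mapP; exists (size t); first by rewrite mem_iota ltnS.
by apply/imageP; exists (in_tuple t).
Qed.

Import GRing.Theory.
Local Open Scope ring_scope.

Section Span.
Variables (R : pzRingType) (V Ed : finType) (s r : Ed -> V) (A : pzRingType)
  (iota : {rmorphism R -> A}) (vtx : V -> A) (edg gst : Ed -> A).
Implicit Types (P : pred (pair_paths V Ed)) (x y : A).

Local Notation span := (in_span s r iota vtx edg gst).
Local Notation pe := (path_elt vtx edg).
Local Notation ge := (ghost_elt vtx gst).

Definition valid_pair (q : pair_paths V Ed) : bool :=
  path_ok s r q.1.1 q.1.2 && path_ok s r q.2.1 q.2.2.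

Definition pair_elt (q : pair_paths V Ed) : A := pe q.1.1 q.1.2 * ge q.2.1 q.2.2.

Definition bounded_pair (k : nat) (q : pair_paths V Ed) : bool :=
  (size q.1.2 == size q.2.2) && (size q.1.2 <= k)%N.

Lemma in_span_ind P (Q : A -> Prop) : Q 0 -> (forall x y, Q x -> Q y -> Q (x + y)) ->
  (forall c v a w b, path_ok s r v a -> path_ok s r w b -> P ((v, a), (w, b)) ->
     Q (iota c * pe v a * ge w b)) ->
  forall x, span P x -> Q x.
Proof.
move=> Q0 QD Qmonomial x [l [ok_l ->]].
elim: l ok_l => [|[c [[v a] [w b]]] l IHl] /=; first by rewrite big_nil.
case/andP=> /and3P[ok_a ok_b P_ab] ok_l; rewrite big_cons.
by apply: QD; [apply: Qmonomial | apply: IHl].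
Qed.

Lemma in_span_monomial P c v a w b : path_ok s r v a -> path_ok s r w b ->
  P ((v, a), (w, b)) -> span P (iota c * pe v a * ge w b).
Proof.
move=> ok_a ok_b P_ab; exists [:: (c, ((v, a), (w, b)))].
by rewrite /= ok_a ok_b P_ab big_seq1.
Qed.

Lemma in_span0 P : span P 0.
Proof. by exists [::]; rewrite big_nil. Qed.

Lemma in_spanD P x y : span P x -> span P y -> span P (x + y).
Proof.
move=> [l1 [ok_l1 ->]] [l2 [ok_l2 ->]]; exists (l1 ++ l2).
by rewrite all_cat ok_l1 ok_l2 big_cat.
Qed.

Lemma sub_in_span P P' x : subpred P P' -> span P x -> span P' x.
Proof.
move=> sPP'; apply: in_span_ind; [exact: in_span0 | exact: in_spanD |].
by move=> c v a w b ok_a ok_b /sPP'; apply: in_span_monomial.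
Qed.

Lemma in_span_seqP P (L : seq (pair_paths V Ed)) (g := map pair_elt L) :
  (forall q, (q \in L) = valid_pair q && P q) ->
  forall x, span P x <-> exists c : 'I_(size g) -> R,
    x = \sum_(i < size g) iota (c i) * g`_i.
Proof.
move=> memL x; split; last first.
  case=> c ->; apply: (big_ind (span P)); [exact: in_span0 | exact: in_spanD |] => i _.
  have /mapP[[[v a] [w b]] q_L ->] : g`_i \in g by apply: mem_nth.
  move: q_L; rewrite memL => /andP[/andP[ok_a ok_b] P_ab].
  by rewrite mulrA; apply: in_span_monomial.
move: x; apply: in_span_ind => [|_ _ [c1 ->] [c2 ->] | c v a w b ok_a ok_b P_ab].
- by exists (fun=> 0); rewrite big1 // => i _; rewrite rmorph0 mul0r.
- exists (fun i => c1 i + c2 i); rewrite -big_split.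
  by apply: eq_bigr => i _; rewrite rmorphD mulrDl.
pose q := ((v, a), (w, b)).
have g_q : pair_elt q \in g by rewrite map_f // memL /valid_pair ok_a ok_b P_ab.
pose i0 := Ordinal (etrans (index_mem _ g) g_q).
exists (fun i => if i == i0 then c else 0).
rewrite (bigD1 i0) //= eqxx nth_index // big1 ?addr0 ?mulrA //.
by move=> i /negbTE->; rewrite rmorph0 mul0r.
Qed.

Lemma bounded_span_fin_gen k : exists g : seq A, forall x,
  span (bounded_pair k) x <->
  exists c : 'I_(size g) -> R, x = \sum_(i < size g) iota (c i) * g`_i.
Proof.
pose ends := [seq (v, a) | v <- enum V, a <- short_seqs Ed k].
pose L := [seq q <- [seq (e1, e2) | e1 <- ends, e2 <- ends]
             | valid_pair q && bounded_pair k q].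
exists (map pair_elt L); apply: in_span_seqP => -[[v a] [w b]].
rewrite mem_filter andb_idr // => /andP[_ /andP[/eqP size_ab size_a]].
have end_a : (v, a) \in ends by rewrite allpairs_f ?mem_enum ?mem_short_seqs.
have end_b : (w, b) \in ends by rewrite allpairs_f ?mem_enum ?mem_short_seqs -?size_ab.
exact: allpairs_f.
Qed.

Lemma in_sum_C0 k : in_sum_C s r iota vtx edg gst k 0.
Proof. by exists (fun=> 0); split=> [m|]; [exact: in_span0 | rewrite big1]. Qed.

Lemma in_sum_CD k x y : in_sum_C s r iota vtx edg gst k x ->
  in_sum_C s r iota vtx edg gst k y -> in_sum_C s r iota vtx edg gst k (x + y).
Proof.
move=> [xs [C_xs ->]] [ys [C_ys ->]]; exists (fun m => xs m + ys m).
by split=> [m|]; [apply: in_spanD (C_xs m) (C_ys m) | rewrite big_split].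
Qed.

Lemma in_sum_C_of_C_m k (m : 'I_k.+1) x :
  C_m s r iota vtx edg gst m x -> in_sum_C s r iota vtx edg gst k x.
Proof.
move=> C_x; exists (fun i => if i == m then x else 0); split.
  by move=> i; case: eqP => [-> // | _]; apply: in_span0.
by rewrite (bigD1 m) //= eqxx big1 ?addr0 // => i /negbTE->.
Qed.

Lemma in_sum_C_of_bounded k x :
  span (bounded_pair k) x -> in_sum_C s r iota vtx edg gst k x.
Proof.
apply: in_span_ind; [exact: in_sum_C0 | exact: in_sum_CD |].
move=> c v a w b ok_a ok_b /andP[/eqP size_ab size_a].
apply: (@in_sum_C_of_C_m k (Ordinal (size_a : (size a < k.+1)%N))).
by apply: in_span_monomial; rewrite //= size_ab !eqxx.
Qed.

Lemma degree0_of_in_sum_C k x :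
  in_sum_C s r iota vtx edg gst k x -> degree0 s r iota vtx edg gst x.
Proof.
case=> xs [C_xs ->]; apply: (big_ind (degree0 _ _ _ _ _ _)).
- exact: in_span0.
- exact: in_spanD.
by move=> m _; apply: sub_in_span (C_xs m) => q /andP[/eqP-> /eqP->].
Qed.

End Span.

Section LeavittFamily.
Variables (R : pzRingType) (V Ed : finType) (s r : Ed -> V) (A : pzRingType)
  (iota : {rmorphism R -> A}) (vtx : V -> A) (edg gst : Ed -> A).
Hypothesis LF : leavitt_family s r iota vtx edg gst.

Local Notation span := (in_span s r iota vtx edg gst).
Local Notation pe := (path_elt vtx edg).
Local Notation ge := (ghost_elt vtx gst).

Lemma mul_vtx v w : vtx v * vtx w = if v == w then vtx v else 0.
Proof. by case: LF => _ []. Qed.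

Lemma mul_vtx_edg f : vtx (s f) * edg f = edg f.
Proof. by case: LF => _ [_ /(_ f)[]]. Qed.

Lemma mul_edg_vtx f : edg f * vtx (r f) = edg f.
Proof. by case: LF => _ [_ /(_ f)[_ []]]. Qed.

Lemma mul_vtx_gst f : vtx (r f) * gst f = gst f.
Proof. by case: LF => _ [_ /(_ f)[_ [_ []]]]. Qed.

Lemma mul_gst_vtx f : gst f * vtx (s f) = gst f.
Proof. by case: LF => _ [_ /(_ f)[_ [_ []]]]. Qed.

Lemma sum_edg_gst v : (exists f, s f = v) -> \sum_(f | s f == v) edg f * gst f = vtx v.
Proof. by case: LF => _ [_ _ _]; apply. Qed.

Lemma path_elt_rcons v a f :
  path_ok s r v (rcons a f) -> pe v (rcons a f) = pe v a * edg f.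
Proof.
case: a => [|h a] /=; last by rewrite -rcons_cons big_rcons.
by rewrite andbT => /eqP <-; rewrite big_seq1 mul_vtx_edg.
Qed.

Lemma ghost_elt_rcons w b g :
  path_ok s r w (rcons b g) -> ge w (rcons b g) = gst g * ge w b.
Proof.
case: b => [|h b] /=; last by rewrite -rcons_cons rev_rcons big_cons.
by rewrite andbT => /eqP <-; rewrite big_seq1 mul_gst_vtx.
Qed.

Lemma mul_path_elt_end v a : path_ok s r v a -> pe v a * vtx (path_end r v a) = pe v a.
Proof.
elim/last_ind: a => [|a f _] ok_af /=; first by rewrite mul_vtx eqxx.
by rewrite path_end_rcons (path_elt_rcons ok_af) -mulrA mul_edg_vtx.
Qed.

Lemma mul_edg_gst_neq f g : r f != r g -> edg f * gst g = 0.
Proof.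
move=> neq_fg; rewrite -mul_edg_vtx -mul_vtx_gst mulrA -(mulrA (edg f)) mul_vtx.
by rewrite (negbTE neq_fg) mulr0 mul0r.
Qed.

Lemma mul_edg_gst_only f : (forall f', s f' = s f -> f' = f) -> edg f * gst f = vtx (s f).
Proof.
move=> only_f; rewrite -sum_edg_gst; last by exists f.
rewrite (eq_bigl (pred1 f)) ?big_pred1_eq // => f' /=.
by apply/eqP/eqP => [/only_f|->].
Qed.

Hypothesis NE : cond_NE s r.

Lemma path_ghost_rcons v a f w b g :
  path_ok s r v (rcons a f) -> path_ok s r w (rcons b g) ->
  on_closed_path s r (s f) -> on_closed_path s r (s g) ->
  pe v (rcons a f) * ge w (rcons b g) = if f == g then pe v a * ge w b else 0.
Proof.
move=> ok_af ok_bg closed_f closed_g.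
rewrite path_elt_rcons // ghost_elt_rcons // mulrA -(mulrA _ (edg f)).
have [<-|neq_fg] := eqVneq f g.
  rewrite mul_edg_gst_only; last first.
    by move=> f' src_f'; apply: (on_closed_path_out_unique NE closed_f).
  by move: ok_af; rewrite path_ok_rcons => /andP[ok_a /eqP->]; rewrite mul_path_elt_end.
rewrite mul_edg_gst_neq ?mulr0 ?mul0r //.
exact: contra_neq (on_closed_path_in_unique NE closed_f closed_g) neq_fg.
Qed.

Lemma bounded_span_path_ghost c v a w b :
  path_ok s r v a -> path_ok s r w b -> size a = size b ->
  span (bounded_pair #|V|) (iota c * pe v a * ge w b).
Proof.
elim/last_ind: a b => [|a f IHa] b ok_a ok_b size_ab.
  by apply: in_span_monomial; rewrite // /bounded_pair -size_ab.
have [short_a|long_a] := leqP (size (rcons a f)) #|V|.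
  by apply: in_span_monomial; rewrite // /bounded_pair size_ab eqxx -size_ab.
case/lastP: b ok_b size_ab => [|b g] ok_b size_ab; first by rewrite size_rcons in size_ab.
have closed_f : on_closed_path s r (s f).
  exact: (long_path_last_src NE ok_a (ltnW long_a)).
have closed_g : on_closed_path s r (s g).
  by apply: (long_path_last_src NE ok_b); rewrite -size_ab ltnW.
rewrite -mulrA path_ghost_rcons //.
case: eqP => _; last by rewrite mulr0; apply: in_span0.
move: ok_a ok_b size_ab; rewrite !path_ok_rcons !size_rcons.
by move=> /andP[ok_a _] /andP[ok_b _] [size_ab]; rewrite mulrA; apply: IHa.
Qed.

Lemma degree0_bounded x :
  degree0 s r iota vtx edg gst x <-> span (bounded_pair #|V|) x.
Proof.
split; last by apply: sub_in_span => q /andP[].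
apply: in_span_ind; [exact: in_span0 | exact: in_spanD |].
by move=> c v a w b ok_a ok_b /eqP; apply: bounded_span_path_ghost.
Qed.

End LeavittFamily.

Theorem proposition4p5 (R : pzRingType) (V Ed : finType) (s r : Ed -> V)
    (A : pzRingType) (iota : {rmorphism R -> A})
    (vtx : V -> A) (edg gst : Ed -> A) :
  cond_NE s r ->
  is_leavitt_path_algebra s r iota vtx edg gst ->
  (exists k : nat, forall x : A,
     degree0 s r iota vtx edg gst x <-> in_sum_C s r iota vtx edg gst k x) /\
  degree0_fin_gen s r iota vtx edg gst.
Proof.
move=> NE [LF _]; have deg0E := degree0_bounded LF NE.
split.
  exists #|V| => x; split=> [/deg0E | ]; first exact: in_sum_C_of_bounded.
  exact: degree0_of_in_sum_C.
have [g fin_gen_g] := bounded_span_fin_gen s r iota vtx edg gst #|V|.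
by exists g => x; split=> [/deg0E/fin_gen_g | /fin_gen_g/deg0E].
Qed.
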